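(* Let $\mathcal{S}_1,\dots,\mathcal{S}_n\subseteq\mathbb{R}^D$ be independent linear subspaces (i.e. $\sum_{\ell=1}^n d_\ell=\dim(\sum_\ell\mathcal{S}_\ell)$, $d_\ell=\dim\mathcal{S}_\ell$), and let $\mathcal{X}=\{\boldsymbol{x}_1,\dots,\boldsymbol{x}_N\}\subseteq\bigcup_\ell\mathcal{S}_\ell$ consist of unit-norm vectors such that each $\mathcal{S}_\ell$ contains at least $d_\ell$ points of $\mathcal{X}$ spanning $\mathcal{S}_\ell$; the class of a point is the index $\ell$ of the subspace containing it. Let $k\ge\sum_\ell d_\ell$. With $\lambda=\infty$, compute $\mathcal{X}_0=\mathcal{X}_0^{(k)}$ by farthest first search ($\mathcal{X}_0^{(1)}=\{\boldsymbol{x}_j\}$ for an arbitrary $j$; for $i=1,\dots,k-1$, $\mathcal{X}_0^{(i+1)}=\mathcal{X}_0^{(i)}\cup\{\boldsymbol{x}\}$ with $\boldsymbol{x}\in\arg\max_{\boldsymbol{x}_j\in\mathcal{X}}f_\infty(\boldsymbol{x}_j,\mathcal{X}_0^{(i)})$); for each $j$ let $\boldsymbol{c}_j=(c_{1j},\dots,c_{Nj})$ be an optimal solution of $\min_{\boldsymbol{c}\in\mathbb{R}^N}\|\boldsymbol{c}\|_1$ s.t. $\boldsymbol{x}_j=\sum_{i:\boldsymbol{x}_i\in\mathcal{X}_0}c_i\boldsymbol{x}_i$; let $\mathcal{C}_0^{(\ell)}\subseteq\mathcal{X}_0$ be the exemplars of class $\ell$ (their labels being given); and assign each $\boldsymbol{x}_j\in\mathcal{X}\setminus\mathcal{X}_0$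 to a class in $\arg\min_\ell\|\boldsymbol{x}_j-\sum_{i:\boldsymbol{x}_i\in\mathcal{C}_0^{(\ell)}}c_{ij}\boldsymbol{x}_i\|_2$. Then every point receives its correct class label.
   Context: $f_\infty(\boldsymbol{x}_j,\mathcal{X}_0):=\min_{\boldsymbol{c}\in\mathbb{R}^N}\|\boldsymbol{c}\|_1$ subject to $\boldsymbol{x}_j=\sum_{i:\boldsymbol{x}_i\in\mathcal{X}_0}c_i\boldsymbol{x}_i$, with value $\infty$ if infeasible. *)

From HB Require Import structures.
From mathcomp Require Import all_boot all_order all_algebra.
From mathcomp Require Import all_classical all_reals ereal.
Set Implicit Arguments. Unset Strict Implicit. Unset Printing Implicit Defensive.
Import Order.TTheory GRing.Theory Num.Theory.
Local Open Scope ring_scope.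
Local Open Scope classical_set_scope.

Section Defs.
Variables (R : realType) (D N : nat) (X : 'I_N -> 'rV[R]_D).

(* "x_i \in X0" where X0 is given by a set of indices of chosen points. *)
Definition inX0 (S : {set 'I_N}) (i : 'I_N) : bool :=
  [exists i0 in S, X i0 == X i].

Definition feasible (S : {set 'I_N}) (x : 'rV[R]_D) (c : 'I_N -> R) : Prop :=
  x = \sum_(i | inX0 S i) c i *: X i.

Definition l1norm (c : 'I_N -> R) : R := \sum_i `|c i|.

(* f_infty(x, X0) = min ||c||_1 over feasible c, +oo if infeasible *)
Definition f_inf (x : 'rV[R]_D) (S : {set 'I_N}) : \bar R :=
  ereal_inf [set (l1norm c)%:E | c in feasible S x].

Definition optimal (S : {set 'I_N}) (x : 'rV[R]_D) (c : 'I_N -> R) : Prop :=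
  feasible S x c /\ forall c', feasible S x c' -> l1norm c <= l1norm c'.

End Defs.

Definition norm2 (R : realType) (D : nat) (v : 'rV[R]_D) : R :=
  Num.sqrt (\sum_i v 0 i ^+ 2).

From HB Require Import structures.
From mathcomp Require Import all_boot all_order all_algebra.
From mathcomp Require Import all_classical all_reals ereal.
From mathcomp Require Import topology normedtype derive matrix_normedtype.
Import numFieldNormedType.Exports.

Set Implicit Arguments.
Unset Strict Implicit.
Unset Printing Implicit Defensive.
Import Order.TTheory GRing.Theory Num.Theory.
Local Open Scope ring_scope.

(* With lambda = oo, f_oo(x, X0) is finite exactly when x lies in the span
   of the exemplars X0.  Hence, as long as some point lies outside that span,
   farthest first search picks such a point and the rank of the span grows by
   one.  All points lie in the direct sum of the S_l, whose dimension is at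
   most k, so after k steps the exemplars span every point and each x_j has an
   optimal representation c_j.  Grouping c_j by class writes x_j as a sum of
   components in the independent subspaces S_l; by independence the only
   nonzero component is x_j itself, in its own class, so the residual of the
   true class is 0 while every other residual is x_j, of norm 1. *)

Section Norm2.
Variables (R : realType) (D : nat).

Lemma norm2_ge0 (v : 'rV[R]_D) : 0 <= norm2 v.
Proof. exact: sqrtr_ge0. Qed.

Lemma norm2_eq0 (v : 'rV[R]_D) : (norm2 v == 0) = (v == 0).
Proof.
have sq_ge0 i : 0 <= v 0 i ^+ 2 by rewrite sqr_ge0.
rewrite /norm2 sqrtr_eq0 le_eqVlt ltNge sumr_ge0 // orbF psumr_eq0 //.
apply/idP/eqP => [v0 | v0].
  apply/rowP => i; rewrite mxE; apply/eqP.
  by rewrite -sqrf_eq0; move/allP: v0; apply; exact: mem_index_enum.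
by apply/allP => i _; rewrite v0 mxE sqrf_eq0 eqxx.
Qed.

Lemma norm2_0 : norm2 (0 : 'rV[R]_D) = 0.
Proof. by apply/eqP; rewrite norm2_eq0. Qed.

Lemma norm2_gt0 (v : 'rV[R]_D) : (0 < norm2 v) = (v != 0).
Proof. by rewrite lt_def norm2_eq0 norm2_ge0 andbT. Qed.

End Norm2.

Section SpanOfExemplars.
Variables (R : realType) (D N : nat) (X : 'I_N -> 'rV[R]_D).

Definition span_of (S : {set 'I_N}) : 'M[R]_D := (\sum_(i in S) <<X i>>)%MS.

Lemma X_sub_span_of (S : {set 'I_N}) i : i \in S -> (X i <= span_of S)%MS.
Proof. by move=> iS; apply: (sumsmx_sup i) => //; rewrite genmxE. Qed.

Lemma span_ofS {S S' : {set 'I_N}} :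
  S \subset S' -> (span_of S <= span_of S')%MS.
Proof.
move=> /fintype.subsetP sSS'; apply/sumsmx_subP => i iS.
by rewrite genmxE X_sub_span_of ?sSS'.
Qed.

Lemma span_of_sub (T : 'M[R]_D) S :
  (forall i, X i <= T)%MS -> (span_of S <= T)%MS.
Proof. by move=> XT; apply/sumsmx_subP => i _; rewrite genmxE. Qed.

Lemma feasible_sub_span S x c : feasible X S x c -> (x <= span_of S)%MS.
Proof.
move=> ->; apply: summx_sub => i /existsP[i0 /andP[i0S /eqP <-]].
exact/scalemx_sub/X_sub_span_of.
Qed.

Lemma sub_span_feasible S x : (x <= span_of S)%MS -> exists c, feasible X S x c.
Proof.
move=> /sub_sums_genmxP[u ->].
exists (fun i => if i \in S then u i 0 0 else 0).
rewrite /feasible [RHS](bigID (fun i => i \in S)) /=.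
rewrite [X in _ + X]big1 ?addr0; last first.
  by move=> i /andP[_ /negbTE ->]; rewrite scale0r.
rewrite [RHS](eq_bigl (fun i => i \in S)); last first.
  move=> i; apply/andP/idP => [[] // | iS]; split=> //.
  by apply/existsP; exists i; rewrite iS eqxx.
apply: eq_bigr => i iS; rewrite iS.
by rewrite {1}[u i]mx11_scalar mul_scalar_mx.
Qed.

Lemma f_inf_eq_pinfty S x : (f_inf X x S == +oo)%E = ~~ (x <= span_of S)%MS.
Proof.
apply/eqP/idP => [f_oo | /negP x_out].
  apply/negP => /sub_span_feasible[c feas_c].
  suff : (f_inf X x S < +oo)%E by rewrite f_oo ltxx.
  by apply: le_lt_trans (ltry (l1norm c)); apply: ereal_inf_lbound; exists c.
rewrite /f_inf.
suff -> : [set (l1norm c)%:E | c in feasible X S x]%classic = set0.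
  exact: ereal_inf0.
by apply/seteqP; split=> // y [c /feasible_sub_span].
Qed.

Lemma farthest_point_outside_span S q :
  (forall j, f_inf X (X j) S <= f_inf X (X q) S)%E ->
  ~~ [forall j, X j <= span_of S]%MS -> ~~ (X q <= span_of S)%MS.
Proof.
move=> farthest /forallPn[j]; rewrite -!f_inf_eq_pinfty => /eqP f_oo.
by rewrite eq_le leey -f_oo farthest.
Qed.

Lemma rank_span_of_setU1 S q :
  ~~ (X q <= span_of S)%MS ->
  (\rank (span_of S) < \rank (span_of (S :|: [set q])))%N.
Proof.
move=> q_out.
have [rank_le rank_eq] :=
  mxrank_leqif_sup (span_ofS (finset.subsetUl S [set q])).
rewrite ltn_neqAle rank_le rank_eq andbT; apply: contra q_out.
apply: submx_trans; apply: X_sub_span_of.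
by rewrite finset.in_setU finset.set11 orbT.
Qed.

End SpanOfExemplars.

Section FarthestFirstSearch.
Variables (R : realType) (D N : nat) (X : 'I_N -> 'rV[R]_D).
Variables (k : nat) (X0s : nat -> {set 'I_N}) (j0 : 'I_N) (p : nat -> 'I_N).
Hypothesis X_neq0 : forall j, X j != 0.
Hypothesis X0s1 : X0s 1%N = [set j0].
Hypothesis X0s_step : forall i, (1 <= i < k)%N ->
  (forall j, f_inf X (X j) (X0s i) <= f_inf X (X (p i)) (X0s i))%E /\
  X0s i.+1 = X0s i :|: [set p i].

Lemma farthest_first_rank m : (m.+1 <= k)%N ->
  [forall j, X j <= span_of X (X0s m.+1)]%MS ||
  (m.+1 <= \rank (span_of X (X0s m.+1)))%N.
Proof.
elim: m => [_ | m IHm lt_m1_k].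
  by rewrite X0s1 /span_of big_set1 genmxE rank_rV X_neq0 orbT.
have [farthest X0s_m2] := X0s_step (i := m.+1) lt_m1_k.
have grow : (span_of X (X0s m.+1) <= span_of X (X0s m.+2))%MS.
  by rewrite X0s_m2 span_ofS ?finset.subsetUl.
have [/forallP all_in | some_out] :=
  boolP [forall j, X j <= span_of X (X0s m.+1)]%MS.
  by apply/orP; left; apply/forallP => j; exact: submx_trans (all_in j) grow.
rewrite (negbTE some_out) /= in IHm.
apply/orP; right; apply: leq_ltn_trans (IHm (ltnW lt_m1_k)) _.
rewrite X0s_m2; apply: rank_span_of_setU1.
exact: farthest_point_outside_span some_out.
Qed.

Lemma farthest_first_spans_all (T : 'M[R]_D) :
  (forall j, X j <= T)%MS -> (\rank T <= k)%N ->
  forall j, (X j <= span_of X (X0s k))%MS.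
Proof.
move=> XT rankT j.
have k_gt0 : (0 < k)%N.
  apply: leq_trans rankT; apply: leq_trans (mxrankS (XT j0)).
  by rewrite rank_rV X_neq0.
have := @farthest_first_rank k.-1; rewrite prednK // leqnn.
move=> /(_ isT) /orP[/forallP // | rank_k].
have span_sub := span_of_sub (X0s k) XT.
have [_ rank_eq] := mxrank_leqif_sup span_sub.
apply: submx_trans (XT j) _.
by rewrite -rank_eq eqn_leq mxrankS ?(leq_trans rankT rank_k).
Qed.

End FarthestFirstSearch.

Section L1Minimization.
Local Open Scope classical_set_scope.
Variables (R : realType) (D N : nat) (X : 'I_N -> 'rV[R]_D).
Variables (S : {set 'I_N}) (x : 'rV[R]_D).

Let coefs (v : 'rV[R]_N) : 'I_N -> R := fun i => v 0 i.

Lemma coefs_row (c : 'I_N -> R) : coefs (\row_i c i) = c.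
Proof. by apply/funext => i; rewrite /coefs mxE. Qed.

Lemma continuous_l1norm_coefs : continuous (fun v => l1norm (coefs v)).
Proof.
apply: continuous_big => [|i _ v]; first exact: add_continuous.
apply: (@continuous_comp _ _ _ (fun w : 'rV[R]_N => w 0 i) (@Num.norm _ R)).
  exact: coord_continuous.
exact: norm_continuous.
Qed.

Let combination (v : 'rV[R]_N) : 'rV[R]_D :=
  \sum_(i | inX0 X S i) coefs v i *: X i.

Lemma continuous_combination : continuous combination.
Proof.
apply: continuous_big => [|i _ v]; first exact: add_continuous.
by apply: continuousZr_tmp; exact: coord_continuous.
Qed.

Lemma compact_feasible_sublevel (b : R) :
  compact [set v | feasible X S x (coefs v) /\ l1norm (coefs v) <= b].
Proof.
have coef_le (v : 'rV[R]_N) i : `|v 0 i| <= l1norm (coefs v).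
  by rewrite /l1norm (bigD1 i) //= lerDl sumr_ge0.
apply: bounded_closed_compact.
  exists b; split; first exact: num_real.
  move=> M b_lt_M v [_ v_le_b]; rewrite /Num.norm /= mx_normrE.
  have v_le_M : l1norm (coefs v) <= M by exact: le_trans v_le_b (ltW b_lt_M).
  apply: bigmax_le => [|[i1 i2] _ /=]; first exact/(le_trans _ v_le_M)/sumr_ge0.
  by rewrite (ord1 i1); exact: le_trans (coef_le v i2) v_le_M.
have -> : [set v | feasible X S x (coefs v) /\ l1norm (coefs v) <= b] =
    combination @^-1` [set x] `&`
    (fun v => l1norm (coefs v)) @^-1` [set r | r <= b].
  by apply/seteqP; split=> v /= [feas le_b]; split.
apply: closedI; apply: (proj1 (continuous_closedP _)).
- exact: continuous_combination.
- exact/accessible_closed_set1/hausdorff_accessible/norm_hausdorff.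
- exact: continuous_l1norm_coefs.
- exact: closed_le.
Qed.

Lemma feasible_exists_optimal :
  (exists c, feasible X S x c) -> exists c, optimal X S x c.
Proof.
move=> [c0 feas_c0].
pose A := [set v | feasible X S x (coefs v) /\ l1norm (coefs v) <= l1norm c0].
have A_row_c0 : A (\row_i c0 i) by rewrite /A /= coefs_row.
have [v /set_mem [feas_v v_le_c0] v_min] :=
  EVT_min_rV (ex_intro _ _ A_row_c0) (@compact_feasible_sublevel (l1norm c0))
    (continuous_subspaceT continuous_l1norm_coefs).
exists (coefs v); split=> // c feas_c.
have [c_le_c0 | /ltW c0_le_c] := leP (l1norm c) (l1norm c0).
  by rewrite -[c]coefs_row; apply/v_min/mem_set; rewrite /A /= coefs_row.
exact: le_trans v_le_c0 c0_le_c.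
Qed.

End L1Minimization.

Section DirectSumComponents.
Variables (F : fieldType) (n D : nat) (S : 'I_n -> 'M[F]_D).
Hypothesis S_direct : mxdirect (\sum_l S l).

Lemma mxdirect_sum_component_eq0 (P : 'I_n -> 'rV[F]_D) (l0 : 'I_n) :
  (forall l, P l <= S l)%MS -> ((\sum_l P l)%R <= S l0)%MS ->
  forall l, l != l0 -> P l = 0.
Proof.
move=> PS sumP_S l l_neq_l0.
have P_l : P l = \sum_l' P l' - \sum_(l' | l' != l) P l'.
  by rewrite (bigD1 l) //= addrK.
apply/eqP; rewrite -submx0 -(mxdirect_sumsP S_direct l isT) sub_capmx PS /=.
rewrite P_l addmx_sub ?eqmx_opp ?summx_sub_sums //.
by apply: submx_trans sumP_S _; apply: (sumsmx_sup l0); rewrite // eq_sym.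
Qed.

End DirectSumComponents.

Lemma nearest_class_eq_label (R : realType) (D n N : nat) (S : 'I_n -> 'M[R]_D)
    (X : 'I_N -> 'rV[R]_D) (lab : 'I_N -> 'I_n) (Q : pred 'I_N) (c : 'I_N -> R)
    (j : 'I_N) :
  mxdirect (\sum_l S l) -> (forall i, X i <= S (lab i))%MS -> X j != 0 ->
  X j = \sum_(i | Q i) c i *: X i ->
  forall l, (forall l',
    norm2 (X j - \sum_(i | Q i && (lab i == l)) c i *: X i)
    <= norm2 (X j - \sum_(i | Q i && (lab i == l')) c i *: X i)) ->
  l = lab j.
Proof.
move=> S_direct X_S Xj_neq0 Xj_eq l nearest.
pose P l' := \sum_(i | Q i && (lab i == l')) c i *: X i.
have P_S l' : (P l' <= S l')%MS.
  by apply: summx_sub => i /andP[_ /eqP <-]; exact: scalemx_sub.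
have sumP : \sum_l' P l' = X j by rewrite Xj_eq (partition_big lab xpredT).
have P_eq0 l' : l' != lab j -> P l' = 0.
  by apply: (mxdirect_sum_component_eq0 S_direct P_S); rewrite sumP X_S.
have P_lab : P (lab j) = X j.
  by rewrite -sumP (bigD1 (lab j)) //= big1 ?addr0.
apply/eqP; apply: contraLR (nearest (lab j)) => l_neq.
rewrite -/(P l) -/(P (lab j)) P_lab P_eq0 // subrr subr0 norm2_0.
by rewrite -ltNge norm2_gt0.
Qed.

Theorem theorem5 (R : realType) (D n N : nat) (S : 'I_n -> 'M[R]_D)
    (X : 'I_N -> 'rV[R]_D) (lab : 'I_N -> 'I_n) (k : nat) :
  (* independent subspaces *)
  (\sum_(l < n) \rank (S l) = \rank (\sum_(l < n) S l)%MS)%N ->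
  (* unit-norm points *)
  (forall j, norm2 (X j) = 1) ->
  (* each point lies in the subspace of its class *)
  (forall j, (X j <= S (lab j))%MS) ->
  (* the points of X lying in S_l span S_l *)
  (forall l, (S l == \sum_(j | submx (X j) (S l)) <<X j>>)%MS) ->
  (\sum_(l < n) \rank (S l) <= k)%N ->
  forall (X0s : nat -> {set 'I_N}) (j0 : 'I_N) (p : nat -> 'I_N),
  X0s 1%N = [set j0] ->
  (forall i, (1 <= i < k)%N ->
     (forall j, f_inf X (X j) (X0s i) <= f_inf X (X (p i)) (X0s i))%E /\
     X0s i.+1 = X0s i :|: [set p i]) ->
  (forall j, exists c, optimal X (X0s k) (X j) c) /\
  (forall c : 'I_N -> 'I_N -> R,
     (forall j, optimal X (X0s k) (X j) (fun i => c i j)) ->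
     forall j, ~~ inX0 X (X0s k) j ->
     forall l : 'I_n,
       (forall l' : 'I_n,
          norm2 (X j - \sum_(i | inX0 X (X0s k) i && (lab i == l)) c i j *: X i)
          <= norm2 (X j - \sum_(i | inX0 X (X0s k) i && (lab i == l')) c i j *: X i)) ->
       l = lab j).
Proof.
move=> indep unit_norm X_S _ rank_le_k X0s j0 p X0s1 X0s_step.
have X_neq0 j : X j != 0 by rewrite -norm2_gt0 unit_norm ltr01.
have X_sum j : (X j <= \sum_l S l)%MS.
  by apply: submx_trans (X_S j) (sumsmx_sup _ _ _).
have spans_all := farthest_first_spans_all X_neq0 X0s1 X0s_step X_sum.
split=> [j | c c_opt j _].
  by apply/feasible_exists_optimal/sub_span_feasible/spans_all; rewrite -indep.
apply: nearest_class_eq_label (X_S) (X_neq0 j) (c_opt j).1.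
by rewrite mxdirectE /= indep.
Qed.
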